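(* Assume ${\rm ZFC}$. If the principle $(\lrcorner)$ holds, then $2^{\aleph_0}>\aleph_1$.
   Context: A map $m:[X]^{<\omega}\to[X]^{<\omega}$ (where $[X]^{<\omega}$ is the set of finite subsets of $X$) is called monotone if $a\subseteq m(a)$ for every finite $a\subseteq X$. The principle $(\lrcorner)$ is the statement: for every sequence $\langle f_\alpha:\alpha<\omega_1\rangle$ of functions from $\omega_1$ to $\omega_1$, every finite subset $F$ of $\omega_1$ and every monotone map $m:[\omega_1]^{<\omega}\to[\omega_1]^{<\omega}$, there exists a function $g:\omega_1\to\omega_1$ such that $F\cap\mathrm{ran}(g)=\emptyset$ and for every $a\in[\omega_1]^{<\omega}$ there exists $b\in[\omega_1]^{<\omega}$ with $a\subseteq b$ such that $\{\beta<\omega_1: f_\alpha(\beta)=g(\beta)\}\subseteq m(b)$ for all $\alpha\in m(b)$. *)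

From mathcomp Require Import all_boot.
From mathcomp Require Import finmap.
Set Implicit Arguments. Unset Strict Implicit. Unset Printing Implicit Defensive.
Local Open Scope fset_scope.

Definition is_omega1 (W : Type) (lt : W -> W -> Prop) : Prop :=
  (forall x, ~ lt x x) /\
  (forall x y z, lt x y -> lt y z -> lt x z) /\
  (forall x y, lt x y \/ x = y \/ lt y x) /\
  well_founded lt /\
  ~ (exists f : W -> nat, injective f) /\
  (forall x : W, exists f : W -> nat,
        forall y z, lt y x -> lt z x -> f y = f z -> y = z).

Definition monotone_fmap (W : choiceType) (m : {fset W} -> {fset W}) : Prop :=
  forall a : {fset W}, fsubset a (m a).

Definition principle_corner (W : choiceType) : Prop :=
  forall (f : W -> W -> W) (F : {fset W}) (m : {fset W} -> {fset W}),
    monotone_fmap m ->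
    exists g : W -> W,
      (forall beta : W, g beta \notin F) /\
      (forall a : {fset W}, exists b : {fset W},
         fsubset a b /\
         forall alpha : W, alpha \in m b ->
           forall beta : W, f alpha beta = g beta -> beta \in m b).

Definition continuum_gt (W : Type) : Prop :=
  (exists h : W -> (nat -> bool), injective h) /\
  ~ (exists h : (nat -> bool) -> W, injective h).

From mathcomp Require Import all_boot.
From mathcomp Require Import finmap.
From Stdlib Require Import ClassicalEpsilon FunctionalExtensionality.
From Stdlib Require Cantor.

Set Implicit Arguments.
Unset Strict Implicit.
Unset Printing Implicit Defensive.

(* (1) |omega_1| <= 2^aleph_0.  Fix, for every x, an injection fx x of the
       initial segment below x into nat; the order relation of that segment,
       transported to nat, is a subset of nat x nat, i.e. a real.  Distinct
       x < x' give distinct reals: otherwise the segment below x' would be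
       order-embedded into its proper initial segment below x, whereas by
       well-founded induction an order-embedding never moves a point down.

   (2) (⌟) excludes 2^aleph_0 <= |omega_1|.  With m = id, (⌟) yields for every
       f a single g that agrees with each row f alpha only on a finite set.
       But if the reals inject into W (and W into the reals), some f lists
       every countable sequence as a row restricted to an infinite set
       {e n | n}, so g agrees with one of its rows on an infinite set. *)

Local Open Scope fset_scope.

Section CodingInitialSegments.
Variables (W : Type) (lt : W -> W -> Prop).
Hypothesis lt_irrefl : forall x, ~ lt x x.
Hypothesis lt_trans : forall x y z, lt x y -> lt y z -> lt x z.
Hypothesis lt_total : forall x y, lt x y \/ x = y \/ lt y x.
Hypothesis lt_wf : well_founded lt.

Variable fx : W -> W -> nat.
Hypothesis fx_inj : forall x y z, lt y x -> lt z x -> fx x y = fx x z -> y = z.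

Definition segment_rel (x : W) (i k : nat) : Prop :=
  exists y z, [/\ lt y x, lt z x, fx x y = i, fx x z = k & lt y z \/ y = z].

(* If x < x', the segments below x and x' cannot carry the same relation on nat:
   the order-embedding phi u := (fx x)^-1 (fx x' u) of the segment below x'
   into the one below x satisfies ~ phi z < z (well-founded induction, in the
   form of no_descent), yet phi x < x. *)
Lemma segment_rel_strict x x' : lt x x' ->
  ~ (forall i k, segment_rel x i k <-> segment_rel x' i k).
Proof.
move=> lt_xx' same.
have no_descent z : lt z x' ->
    forall y, lt y x -> fx x y = fx x' z -> ~ lt y z.
  elim/(well_founded_ind lt_wf): z => z IH lt_zx' y lt_yx fx_yz lt_yz.
  have lt_yx' : lt y x' := lt_trans lt_yx lt_xx'.
  have /same [a [b [lt_ax lt_bx fx_a fx_b le_ab]]] : segment_rel x' (fx x' y) (fx x' z).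
    by exists y, z; split => //; left.
  have eq_by : b = y by apply: (fx_inj lt_bx lt_yx); rewrite fx_b fx_yz.
  subst b; case: le_ab => [lt_ay | eq_ay].
  - exact: (IH y lt_yz lt_yx' a lt_ax fx_a lt_ay).
  - subst a; have eq_yz : y = z by apply: (fx_inj lt_yx' lt_zx'); rewrite -fx_a fx_yz.
    by subst y; apply: (lt_irrefl lt_yz).
have /same [a [b [lt_ax lt_bx fx_a _ _]]] : segment_rel x' (fx x' x) (fx x' x).
  by exists x, x; split => //; right.
exact: (no_descent x lt_xx' a lt_ax fx_a lt_ax).
Qed.

Definition segment_code (x : W) : nat -> bool :=
  fun m => if excluded_middle_informative
                (segment_rel x (Cantor.of_nat m).1 (Cantor.of_nat m).2)
           then true else false.

Lemma segment_codeP x i k :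
  segment_code x (Cantor.to_nat (i, k)) <-> segment_rel x i k.
Proof. by rewrite /segment_code Cantor.cancel_of_to; case: excluded_middle_informative. Qed.

Lemma segment_code_inj : injective segment_code.
Proof.
move=> x x' eq_code.
have same i k : segment_rel x i k <-> segment_rel x' i k.
  by rewrite -!segment_codeP eq_code.
case: (lt_total x x') => [lt_xx' | [// | lt_x'x]]; exfalso.
- exact: segment_rel_strict lt_xx' same.
- by apply: segment_rel_strict lt_x'x _ => i k; rewrite same.
Qed.

End CodingInitialSegments.

Lemma omega1_into_cantor (W : Type) (lt : W -> W -> Prop) :
  is_omega1 lt -> exists j : W -> (nat -> bool), injective j.
Proof.
move=> [irr [trans [total [wf [_ segs]]]]].
have [fx fx_inj] := ClassicalEpsilon.choice _ segs.
by exists (segment_code lt fx); apply: segment_code_inj.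
Qed.

Lemma corner_finite_agreement (W : choiceType) : principle_corner W ->
  forall f : W -> W -> W, exists g : W -> W, forall alpha,
    exists b : {fset W}, forall beta, f alpha beta = g beta -> beta \in b.
Proof.
move=> corner f; have [g [_ Hg]] := corner f fset0 id (@fsubset_refl W).
exists g => alpha; have [b [sub_ab Hb]] := Hg [fset alpha].
by exists b; apply: Hb; apply: (fsubsetP sub_ab); rewrite inE.
Qed.

Lemma fset_no_injective_seq (T : choiceType) (b : {fset T}) (e : nat -> T) :
  injective e -> ~ (forall n, e n \in b).
Proof.
move=> e_inj e_in.
have : size (map e (iota 0 (size b).+1)) <= size b.
  apply: uniq_leq_size; first by rewrite map_inj_uniq ?iota_uniq.
  by move=> x /mapP [n _ ->].
by rewrite size_map size_iota ltnn.
Qed.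

(* Row h c is decoded from the real c; its value at e n is the element whose
   code is the n-th column of c. *)
Lemma universal_family (W : Type) (h : (nat -> bool) -> W) (j : W -> (nat -> bool))
    (e : nat -> W) :
  injective h -> injective j -> injective e ->
  exists f : W -> W -> W, forall s : nat -> W, exists alpha, forall n, f alpha (e n) = s n.
Proof.
move=> h_inj j_inj e_inj.
pose row_value alpha beta y := exists n c,
  [/\ beta = e n, h c = alpha & j y = fun k => c (Cantor.to_nat (n, k))].
exists (fun alpha beta => epsilon (inhabits beta) (row_value alpha beta)) => s.
pose c := fun m => j (s (Cantor.of_nat m).1) (Cantor.of_nat m).2.
have column n : (fun k => c (Cantor.to_nat (n, k))) = j (s n).
  by apply: functional_extensionality => k; rewrite /c Cantor.cancel_of_to.
exists (h c) => n.
have /(epsilon_spec (inhabits (e n))) : exists y, row_value (h c) (e n) y.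
  by exists (s n), n, c; split => //; exact/esym/column.
move=> [n' [c' [/e_inj -> /h_inj -> j_eps]]].
by apply: j_inj; rewrite j_eps column.
Qed.

Theorem mainTheorem1 (W : choiceType) (lt : W -> W -> Prop) :
  is_omega1 lt -> principle_corner W -> continuum_gt W.
Proof.
move=> omega1 corner.
have [j j_inj] := omega1_into_cantor omega1.
split; first by exists j.
move=> [h h_inj].
pose e n := h (fun k => Nat.eqb k n).
have e_inj : injective e.
  move=> n n' /h_inj /(congr1 (fun c => c n)) /=.
  by rewrite PeanoNat.Nat.eqb_refl => /esym /PeanoNat.Nat.eqb_eq.
have [f f_universal] := universal_family h_inj j_inj e_inj.
have [g g_finite] := corner_finite_agreement corner f.
have [alpha row_g] := f_universal (fun n => g (e n)).
have [b agree_in_b] := g_finite alpha.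
by apply: (fset_no_injective_seq e_inj) => n; apply: agree_in_b.
Qed.
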